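(* Let $(G,\mathcal{T},(A^\circ,B^\circ),k)$ be a Terminal Separation instance, let $\mathcal{T}'$ be the set of terminal pairs disjoint from $A^\circ\cup B^\circ$, and let $\{s,t\}\in\mathcal{T}'$. Let $\mathcal{F}$ be the family of all maximal terminal separations of minimum cost among terminal separations extending $(A^\circ\cup\{s\},B^\circ\cup\{t\})$, and suppose that no separation in $\mathcal{F}$ contains in the union of its two sides any terminal pair of $\mathcal{T}'$ other than $\{s,t\}$. Then there exists a unique maximal terminal separation $(A_s^{\max},B_t^{\min})$ such that $A_s^{\max}\supseteq A_s$ and $B_t^{\min}\subseteq B_t$ for every $(A_s,B_t)\in\mathcal{F}$. Moreover, if $A$ is a set with $A^\circ\cup\{s\}\subseteq A$, $A\cap B^\circ=\emptyset$, $A\cap\bigcup\mathcal{T}'\subseteq\{s\}$ and $A\setminus A_s^{\max}\ne\emptyset$, then $d(A)>d(A_s^{\max})$.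
   Context: Graphs may have multiple edges but no loops; $d(X)$ is the number of edges with exactly one endpoint in $X$. For a family $\mathcal{T}$ of pairwise disjoint vertex pairs (terminals are their vertices), a terminal separation is a pair $(A,B)$ of disjoint vertex sets such that each pair in $\mathcal{T}$ either has one vertex in $A$ and one in $B$ or is disjoint from $A\cup B$; $(A',B')$ extends $(A,B)$ if $A\subseteq A'$, $B\subseteq B'$; cost $c(A,B)=(d(A)+d(B))/2$; a terminal separation is maximal if every other terminal separation extending it has strictly larger cost. A Terminal Separation instance $(G,\mathcal{T},(A^\circ,B^\circ),k)$ has every terminal of degree at most one and $(A^\circ,B^\circ)$ a terminal separation. $\bigcup\mathcal{T}'$ denotes the set of all terminals of pairs in $\mathcal{T}'$. *)

From mathcomp Require Import all_boot all_order all_algebra.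
Set Implicit Arguments. Unset Strict Implicit. Unset Printing Implicit Defensive.
Import Order.TTheory GRing.Theory Num.Theory.

Section TermSep.
Variables (V E : finType) (ends : E -> V * V).

(* A multigraph on vertex set V with edge set E; edge e joins (ends e).1 and
   (ends e).2.  Loops are excluded. *)
Definition loopless := forall e : E, (ends e).1 != (ends e).2.

Definition incident (v : V) (e : E) := ((ends e).1 == v) || ((ends e).2 == v).

(* degree of a vertex (no loops, so each incident edge counts once) *)
Definition deg (v : V) : nat := #|[set e : E | incident v e]|.

Definition dcut (X : {set V}) : nat :=
  #|[set e : E | ((ends e).1 \in X) != ((ends e).2 \in X)]|.

Definition cost (A B : {set V}) : rat := ((dcut A + dcut B)%:R / 2%:R)%R.

Variable T : {set {set V}}.

Definition terminal_pairs :=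
  (forall p, p \in T -> #|p| = 2) /\
  (forall p q, p \in T -> q \in T -> p != q -> [disjoint p & q]).

Definition is_tsep (A B : {set V}) :=
  [disjoint A & B] /\
  forall p, p \in T ->
    (#|p :&: A| = 1 /\ #|p :&: B| = 1) \/ [disjoint p & A :|: B].

Definition extends (A B A' B' : {set V}) := A \subset A' /\ B \subset B'.

Definition maximal_tsep (A B : {set V}) :=
  is_tsep A B /\
  forall A' B', is_tsep A' B' -> extends A B A' B' -> (A', B') <> (A, B) ->
    (cost A B < cost A' B')%R.

Definition terminal_deg_le1 := forall v, v \in cover T -> deg v <= 1.

Definition Tprime (A0 B0 : {set V}) : {set {set V}} :=
  [set p in T | [disjoint p & A0 :|: B0]].

Definition inF (A0 B0 : {set V}) (s t : V) (A B : {set V}) :=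
  [/\ is_tsep A B,
      extends (A0 :|: [set s]) (B0 :|: [set t]) A B,
      (forall A' B', is_tsep A' B' ->
         extends (A0 :|: [set s]) (B0 :|: [set t]) A' B' ->
         (cost A B <= cost A' B')%R)
    & maximal_tsep A B].

End TermSep.

From mathcomp Require Import all_boot all_order all_algebra.
From mathcomp Require Import zify.
Import Order.TTheory GRing.Theory Num.Theory.
Set Implicit Arguments. Unset Strict Implicit. Unset Printing Implicit Defensive.

(** Call a pair (X, Y) extending (A0 ∪ {s}, B0 ∪ {t}) admissible if X and Y
    are disjoint and meet the terminals of T' only in s and t respectively.
    Admissible pairs are terminal separations, and they are closed under
    (X1 ∪ X2, Y1 ∩ Y2) and (X1 ∩ X2, Y1 ∪ Y2).  The hypothesis on F makes every
    member of F admissible, so by submodularity of d the minimum-cost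
    admissible pairs form a lattice, and the member of F with the largest
    A-side dominates all others.  For the last claim, (A ∪ Amax, Bmin \ A) is
    admissible and must cost more than the minimum (otherwise a member of F
    would contain A); comparing it with (A ∩ Amax, Bmin) and (A \ Bmin, Bmin)
    by submodularity and posimodularity of d gives d Amax < d A. *)

Section Cuts.
Variables (V E : finType) (ends : E -> V * V).
Local Notation d := (dcut ends).

Lemma dcutE X : d X = \sum_e (((ends e).1 \in X) != ((ends e).2 \in X) : nat).
Proof. by rewrite /dcut -sum1dep_card big_mkcond /=; apply: eq_bigr => e _; case: ifP. Qed.

Lemma dcutU_dcutI X Y : d (X :|: Y) + d (X :&: Y) <= d X + d Y.
Proof.
rewrite !dcutE -!big_split /=; apply: leq_sum => e _; rewrite !inE.
by case: ((ends e).1 \in X); case: ((ends e).2 \in X);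
   case: ((ends e).1 \in Y); case: ((ends e).2 \in Y).
Qed.

Lemma dcutD_dcutD X Y : d (X :\: Y) + d (Y :\: X) <= d X + d Y.
Proof.
rewrite !dcutE -!big_split /=; apply: leq_sum => e _; rewrite !inE.
by case: ((ends e).1 \in X); case: ((ends e).2 \in X);
   case: ((ends e).1 \in Y); case: ((ends e).2 \in Y).
Qed.

Lemma ler_cost A B A' B' :
  (cost ends A B <= cost ends A' B')%R = (d A + d B <= d A' + d B').
Proof. by rewrite /cost ler_pM2r ?invr_gt0 ?ltr0n // ler_nat. Qed.

Lemma ltr_cost A B A' B' :
  (cost ends A B < cost ends A' B')%R = (d A + d B < d A' + d B').
Proof. by rewrite /cost ltr_pM2r ?invr_gt0 ?ltr0n // ltr_nat. Qed.

End Cuts.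

Section Pairs.
Variable V : finType.
Implicit Types (p A B X Y : {set V}) (a b : V).

Lemma card_pairI1 a b X : a \in X -> b \notin X -> #|[set a; b] :&: X| = 1.
Proof.
move=> aX bX; suff -> : [set a; b] :&: X = [set a] by rewrite cards1.
apply/setP => x; rewrite !inE; have [->|_] := eqVneq x a; first by rewrite aX.
by have [->|] := eqVneq x b; rewrite ?(negbTE bX) ?andbF.
Qed.

Lemma split_pair_sub p A B :
  #|p| = 2 -> #|p :&: A| = 1 -> #|p :&: B| = 1 -> [disjoint A & B] ->
  p \subset A :|: B.
Proof.
move=> p2 pA pB dAB; apply/setIidPl/eqP.
rewrite eqEcard subsetIl p2 setIUr cardsU pA pB.
by rewrite setIACA setIid (disjoint_setI0 dAB) setI0 cards0.
Qed.

Lemma setI_extends p A B X Y :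
  p \subset A :|: B -> A \subset X -> B \subset Y -> [disjoint X & Y] ->
  p :&: X = p :&: A.
Proof.
move=> pAB AX BY dXY; apply/setP => x; rewrite !inE.
case xp: (x \in p) => //=; case/setUP: (subsetP pAB x xp) => [xA | xB].
  by rewrite xA (subsetP AX).
by rewrite (disjointFl dXY (subsetP BY x xB)) (disjointFl (disjointW AX BY dXY) xB).
Qed.

End Pairs.

Lemma tsep_extends (V : finType) (T : {set {set V}}) A B X Y :
  terminal_pairs T -> is_tsep T A B -> extends A B X Y -> [disjoint X & Y] ->
  (forall p, p \in T -> [disjoint p & A :|: B] ->
     (#|p :&: X| = 1 /\ #|p :&: Y| = 1) \/ [disjoint p & X :|: Y]) ->
  is_tsep T X Y.
Proof.
move=> [T2 _] [dAB tAB] [AX BY] dXY new; split => // p pT.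
case: (tAB p pT) => [[pA pB] | ]; last exact: new.
have pAB := split_pair_sub (T2 p pT) pA pB dAB.
left; rewrite (setI_extends pAB AX BY dXY) pA; split => //.
by rewrite setUC in pAB; rewrite disjoint_sym in dXY; rewrite (setI_extends pAB BY AX dXY).
Qed.

Section TerminalPair.
Variables (V E : finType) (ends : E -> V * V) (T : {set {set V}}).
Variables (A0 B0 : {set V}) (s t : V).
Hypotheses (HT : terminal_pairs T) (HA0B0 : is_tsep T A0 B0).
Hypothesis Hst : [set s; t] \in Tprime T A0 B0.

Local Notation Tp := (Tprime T A0 B0).
Local Notation d := (dcut ends).
Local Notation A0s := (A0 :|: [set s]).
Local Notation B0t := (B0 :|: [set t]).
Local Notation inF := (inF ends T A0 B0 s t).

Lemma st_in_T : [set s; t] \in T.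
Proof. by move: Hst; rewrite inE => /andP []. Qed.

Lemma s_neq_t : s != t.
Proof. by have := HT.1 _ st_in_T; rewrite cards2; case: (s != t). Qed.

Lemma st_sub_cover : [set s; t] \subset cover Tp.
Proof. exact: bigcup_sup Hst. Qed.

Definition admissible (X Y : {set V}) :=
  [/\ A0s \subset X, B0t \subset Y, [disjoint X & Y],
      X :&: cover Tp \subset [set s] & Y :&: cover Tp \subset [set t]].

Lemma admissible_tsep X Y : admissible X Y -> is_tsep T X Y.
Proof.
case=> sX tY dXY cX cY; apply: (tsep_extends HT HA0B0) => //.
  by split; [apply: subset_trans sX | apply: subset_trans tY]; apply: subsetUl.
have sXs : s \in X by apply: (subsetP sX); rewrite !inE eqxx orbT.
have tYt : t \in Y by apply: (subsetP tY); rewrite !inE eqxx orbT.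
move=> p pT dp; have [-> | pst] := eqVneq p [set s; t].
  left; split; first by apply: card_pairI1; rewrite ?(disjointFl dXY tYt).
  by rewrite setUC; apply: card_pairI1; rewrite ?(disjointFr dXY sXs).
have dpst := HT.2 _ _ pT st_in_T pst.
have pC : p \subset cover Tp by apply: bigcup_sup; rewrite inE pT dp.
right; apply/pred0P => x /=; apply/negbTE/negP => /andP [xp /setUP xXY].
have xst : x \in [set s; t].
  by rewrite !inE; case: xXY => xZ; [move: cX | move: cY];
     move/subsetP/(_ x); rewrite !inE xZ (subsetP pC x xp) => /(_ isT) ->; rewrite ?orbT.
by rewrite (disjointFr dpst xp) in xst.
Qed.

Hypothesis HF : forall A B, inF A B ->
  forall p, p \in Tp -> p != [set s; t] -> ~~ (p \subset A :|: B).

Lemma inF_admissible A B : inF A B -> admissible A B.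
Proof.
move=> FAB; have [[dAB tAB] [sA tB] _ _] := FAB.
have sAs : s \in A by apply: (subsetP sA); rewrite !inE eqxx orbT.
have tBt : t \in B by apply: (subsetP tB); rewrite !inE eqxx orbT.
have ABst : (A :|: B) :&: cover Tp \subset [set s; t].
  apply/subsetP => x /setIP [xAB /bigcupP [p pTp xp]].
  have [<- // | pst] := eqVneq p [set s; t].
  have pT : p \in T by move: pTp; rewrite inE => /andP [].
  case: (tAB p pT) => [[pA pB] | dp]; last by rewrite (disjointFr dp xp) in xAB.
  by have := HF FAB pTp pst; rewrite split_pair_sub // HT.1.
split => //; apply/subsetP => x /setIP [xZ xC];
  have := subsetP ABst x; rewrite !inE xZ xC ?orbT => /(_ isT) /orP [] // /eqP xst.
- by rewrite xst (disjointFl dAB tBt) in xZ.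
- by rewrite xst (disjointFr dAB sAs) in xZ.
Qed.

Definition tsepb (X Y : {set V}) := [disjoint X & Y] &&
  [forall p in T, (#|p :&: X| == 1) && (#|p :&: Y| == 1) || [disjoint p & X :|: Y]].

Lemma tsepP X Y : reflect (is_tsep T X Y) (tsepb X Y).
Proof.
apply: (iffP andP) => [[dXY /forall_inP tXY] | [dXY tXY]]; split => //.
  by move=> p /tXY /orP [/andP [/eqP -> /eqP ->] | ->]; [left | right].
by apply/forall_inP => p /tXY [[-> ->] | ->]; rewrite ?eqxx ?orbT.
Qed.

Definition feasible (P : {set V} * {set V}) :=
  [&& tsepb P.1 P.2, A0s \subset P.1 & B0t \subset P.2].

Lemma feasibleP X Y :
  reflect (is_tsep T X Y /\ extends A0s B0t X Y) (feasible (X, Y)).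
Proof.
apply: (iffP and3P) => [[/tsepP tXY AX BY] | [tXY [AX BY]]]; first by [].
by split; first apply/tsepP.
Qed.

Lemma admissible_feasible X Y : admissible X Y -> feasible (X, Y).
Proof. by move=> aXY; apply/feasibleP; split; [apply: admissible_tsep | case: aXY]. Qed.

Lemma admissible_base : admissible A0s B0t.
Proof.
have dC : [disjoint cover Tp & A0 :|: B0].
  by rewrite disjoint_sym; apply/bigcup_disjointP => p; rewrite inE disjoint_sym => /andP [].
have notA0B0 x : x \in cover Tp -> x \notin A0 /\ x \notin B0.
  by move=> /(disjointFr dC); rewrite inE => /norP.
have [sA0 sB0] := notA0B0 s (subsetP st_sub_cover s (set21 s t)).
have [tA0 tB0] := notA0B0 t (subsetP st_sub_cover t (set22 s t)).
split => //.
- apply/pred0P => x /=; apply/negbTE/negP.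
  case/andP => /setUP [xA | /set1P ->] /setUP [xB | /set1P xt].
  + by rewrite (disjointFr HA0B0.1 xA) in xB.
  + by move: xA; rewrite xt (negbTE tA0).
  + by rewrite xB in sB0.
  + by move: s_neq_t; rewrite xt eqxx.
- apply/subsetP => x /setIP [/setUP [xA | //] /notA0B0 [xA0 _]].
  by rewrite xA in xA0.
- apply/subsetP => x /setIP [/setUP [xB | //] /notA0B0 [_ xB0]].
  by rewrite xB in xB0.
Qed.

(* Twice the cost, kept in nat. *)
Definition cutsum (P : {set V} * {set V}) := d P.1 + d P.2.

Definition min_pair :=
  [arg min_(P < (A0s, B0t) | feasible P) cutsum P].

Definition mincut := cutsum min_pair.

Lemma mincut_spec : feasible min_pair /\ forall P, feasible P -> mincut <= cutsum P.
Proof.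
rewrite /mincut /min_pair; case: arg_minnP => //.
exact: admissible_feasible admissible_base.
Qed.

Definition optimal P := feasible P && (cutsum P == mincut).

Lemma inF_optimal A B : inF A B -> optimal (A, B).
Proof.
case=> tAB eAB minAB _; have [/feasibleP [tm em] minm] := mincut_spec.
have fAB : feasible (A, B) by apply/feasibleP.
by rewrite /optimal fAB eqn_leq minm // andbT -ler_cost minAB.
Qed.

Lemma optimal_maximal_inF A B :
  optimal (A, B) ->
  (forall A' B', optimal (A', B') -> extends A B A' B' -> (A', B') = (A, B)) ->
  inF A B.
Proof.
move=> /andP [/feasibleP [tAB [A0A B0B]] /eqP cAB] maxAB.
have [_ minm] := mincut_spec; rewrite /cutsum /= in cAB.
have minAB A' B' : is_tsep T A' B' -> extends A0s B0t A' B' -> d A + d B <= d A' + d B'.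
  by move=> tAB' eAB'; rewrite cAB; apply: (minm (A', B')); apply/feasibleP.
split => // [A' B' tAB' eAB' | ]; first by rewrite ler_cost minAB.
split => // A' B' tAB' [AA' BB'] neq; rewrite ltr_cost ltnNge; apply/negP => le'.
have eAB' : extends A0s B0t A' B' by split; apply: subset_trans; eassumption.
apply/neq/maxAB => //; rewrite /optimal /cutsum /= eqn_leq -cAB le' minAB //.
by rewrite !andbT; apply/feasibleP.
Qed.

Lemma inF_optimal_above A B A' B' :
  inF A B -> optimal (A', B') -> extends A B A' B' -> (A', B') = (A, B).
Proof.
move=> FAB /andP [/feasibleP [tAB' _] /eqP cAB'] eAB'.
have /andP [_ /eqP cAB] := inF_optimal FAB; have [_ _ _ [_ maxAB]] := FAB.
apply/eqP/negPn/negP => /eqP neq; have := maxAB A' B' tAB' eAB' neq.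
by rewrite ltr_cost -[_ + _]/(cutsum (A, B)) -[X in _ < X]/(cutsum (A', B')) cAB cAB' ltnn.
Qed.

Lemma exists_inF_above X Y :
  optimal (X, Y) -> exists A B, [/\ inF A B, X \subset A & Y \subset B].
Proof.
move=> oXY; pose above R := [&& optimal R, X \subset R.1 & Y \subset R.2].
have [[A B] /and3P [oAB XA YB] maxAB] := @arg_maxnP _ (X, Y) above
  (fun R => #|R.1| + #|R.2|) (introT and3P (And3 oXY (subxx X) (subxx Y))).
exists A, B; split => //; apply: optimal_maximal_inF => // A' B' oAB' [AA' BB'].
have := maxAB (A', B'); rewrite /above oAB' (subset_trans XA AA') (subset_trans YB BB').
move=> /(_ isT) /= le; have cA := subset_leq_card AA'; have cB := subset_leq_card BB'.
by congr pair; apply/eqP; rewrite eq_sym eqEcard ?AA' ?BB' /=; lia.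
Qed.

Lemma mincut_le X Y : admissible X Y -> mincut <= d X + d Y.
Proof. by move=> /admissible_feasible; apply: mincut_spec.2. Qed.

Lemma admissible_optimal X Y : admissible X Y -> d X + d Y = mincut -> optimal (X, Y).
Proof. by move=> aXY cXY; rewrite /optimal admissible_feasible //; apply/eqP. Qed.

Lemma inF_mincut A B : inF A B -> d A + d B = mincut.
Proof. by move=> /inF_optimal /andP [_ /eqP]. Qed.

Lemma admissible_setUI A1 B1 A2 B2 :
  admissible A1 B1 -> admissible A2 B2 -> admissible (A1 :|: A2) (B1 :&: B2).
Proof.
move=> [sA1 tB1 d1 cA1 cB1] [sA2 tB2 d2 cA2 cB2]; split.
- exact: subset_trans sA1 (subsetUl _ _).
- by rewrite subsetI tB1.
- apply/pred0P => x /=; apply/negbTE/negP => /andP [/setUP xA /setIP [xB1 xB2]].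
  by case: xA => xA; [rewrite (disjointFr d1 xA) in xB1 | rewrite (disjointFr d2 xA) in xB2].
- by rewrite setIUl subUset cA1.
- exact: subset_trans (setSI _ (subsetIl _ _)) cB1.
Qed.

Lemma admissible_setIU A1 B1 A2 B2 :
  admissible A1 B1 -> admissible A2 B2 -> admissible (A1 :&: A2) (B1 :|: B2).
Proof.
move=> [sA1 tB1 d1 cA1 cB1] [sA2 tB2 d2 cA2 cB2]; split.
- by rewrite subsetI sA1.
- exact: subset_trans tB1 (subsetUl _ _).
- apply/pred0P => x /=; apply/negbTE/negP => /andP [/setIP [xA1 xA2] /setUP xB].
  by case: xB => xB; [rewrite (disjointFr d1 xA1) in xB | rewrite (disjointFr d2 xA2) in xB].
- exact: subset_trans (setSI _ (subsetIl _ _)) cA1.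
- by rewrite setIUl subUset cB1.
Qed.

Lemma mincut_setUI A1 B1 A2 B2 :
  admissible A1 B1 -> admissible A2 B2 ->
  d A1 + d B1 = mincut -> d A2 + d B2 = mincut ->
  d (A1 :|: A2) + d (B1 :&: B2) = mincut /\ d (A1 :&: A2) + d (B1 :|: B2) = mincut.
Proof.
move=> a1 a2 c1 c2.
have mU := mincut_le (admissible_setUI a1 a2); have mI := mincut_le (admissible_setIU a1 a2).
have sA := dcutU_dcutI ends A1 A2; have sB := dcutU_dcutI ends B1 B2.
lia.
Qed.

Lemma inF_antitone A1 B1 A2 B2 :
  inF A1 B1 -> inF A2 B2 -> A1 \subset A2 -> B2 \subset B1.
Proof.
move=> F1 F2 A12; have a1 := inF_admissible F1; have a2 := inF_admissible F2.
have [_ cI] := mincut_setUI a1 a2 (inF_mincut F1) (inF_mincut F2).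
have oI := admissible_optimal (admissible_setIU a1 a2) cI.
rewrite (setIidPl A12) in oI.
have /(congr1 snd) /= <- := inF_optimal_above F1 oI (conj (subxx A1) (subsetUl B1 B2)).
exact: subsetUr.
Qed.

Lemma exists_greatest_inF : exists Aq Bq,
  inF Aq Bq /\ forall A B, inF A B -> A \subset Aq /\ Bq \subset B.
Proof.
have oM : optimal min_pair by rewrite /optimal mincut_spec.1 /=.
have [[A1 B1] /= o1 max1] := arg_maxnP (fun R : {set V} * {set V} => #|R.1|) oM.
have [Aq [Bq [Fq A1q _]]] := exists_inF_above o1.
exists Aq, Bq; split => // A B FAB.
have aA := inF_admissible FAB; have aq := inF_admissible Fq.
have [cU _] := mincut_setUI aA aq (inF_mincut FAB) (inF_mincut Fq).
have [A' [B' [F' UA' _]]] := exists_inF_above (admissible_optimal (admissible_setUI aA aq) cU).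
have AqA' : Aq = A'.
  apply/eqP; rewrite eqEcard (subset_trans (subsetUr A Aq) UA') /=.
  exact: leq_trans (max1 (A', B') (inF_optimal F')) (subset_leq_card A1q).
have AAq : A \subset Aq by rewrite AqA'; apply: subset_trans UA'; apply: subsetUl.
by split => //; apply: inF_antitone FAB Fq AAq.
Qed.

Lemma admissible_exchange Aq Bq (A : {set V}) :
  admissible Aq Bq ->
  A0s \subset A -> [disjoint A & B0] -> A :&: cover Tp \subset [set s] ->
  [/\ admissible (A :|: Aq) (Bq :\: A), admissible (A :&: Aq) Bq
     & admissible (A :\: Bq) Bq].
Proof.
move=> [sq tq dq cq1 cq2] sA dAB0 cA.
have tnA : t \notin A.
  apply/negP => tA; have /set1P ts : t \in [set s].
    by apply: (subsetP cA); rewrite inE tA (subsetP st_sub_cover) ?set22.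
  by move: s_neq_t; rewrite ts eqxx.
split; split => //.
- exact: subset_trans sA (subsetUl _ _).
- rewrite subsetD tq; apply/pred0P => x /=; apply/negbTE/negP.
  case/andP => /setUP [xB0 | /set1P ->] xA; last by rewrite xA in tnA.
  by rewrite (disjointFr dAB0 xA) in xB0.
- apply/pred0P => x /=; apply/negbTE/negP => /andP [/setUP xA /setDP [xB xnA]].
  by case: xA => xA; [rewrite xA in xnA | rewrite (disjointFr dq xA) in xB].
- by rewrite setIUl subUset cA.
- exact: subset_trans (setSI _ (subsetDl _ _)) cq2.
- by rewrite subsetI sA.
- exact: disjointWl (subsetIr _ _) dq.
- exact: subset_trans (setSI _ (subsetIr _ _)) cq1.
- by rewrite subsetD sA (disjointWl sq dq).
- apply/pred0P => x /=; apply/negbTE/negP => /andP [/setDP [_ xnB] xB].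
  by rewrite xB in xnB.
- exact: subset_trans (setSI _ (subsetDl _ _)) cA.
Qed.

Lemma dcut_lt_of_not_sub Aq Bq (A : {set V}) :
  inF Aq Bq -> (forall A' B', inF A' B' -> A' \subset Aq) ->
  A0s \subset A -> [disjoint A & B0] -> A :&: cover Tp \subset [set s] ->
  A :\: Aq != set0 -> d Aq < d A.
Proof.
move=> Fq greatest sA dAB0 cA nsub; have cq := inF_mincut Fq.
have [aU aI aD] := admissible_exchange (inF_admissible Fq) sA dAB0 cA.
have ltU : mincut < d (A :|: Aq) + d (Bq :\: A).
  rewrite ltn_neqAle mincut_le // andbT; apply/negP => /eqP eU.
  have [A' [B' [F' UA' _]]] := exists_inF_above (admissible_optimal aU (esym eU)).
  move/negP: nsub; apply; rewrite setD_eq0.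
  exact: subset_trans (subsetUl _ _) (subset_trans UA' (greatest _ _ F')).
have mI := mincut_le aI; have mD := mincut_le aD.
have sU := dcutU_dcutI ends A Aq; have sD := dcutD_dcutD ends A Bq.
lia.
Qed.

End TerminalPair.

Theorem lemma5p4 (V E : finType) (ends : E -> V * V) (T : {set {set V}})
    (A0 B0 : {set V}) (k : nat) (s t : V) :
  loopless ends ->
  terminal_pairs T ->
  terminal_deg_le1 ends T ->
  is_tsep T A0 B0 ->
  [set s; t] \in Tprime T A0 B0 ->
  (forall A B, inF ends T A0 B0 s t A B ->
     forall p, p \in Tprime T A0 B0 -> p != [set s; t] ->
       ~~ (p \subset A :|: B)) ->
  exists Amax Bmin : {set V},
    [/\ inF ends T A0 B0 s t Amax Bmin,
        maximal_tsep ends T Amax Bmin,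
        (forall As Bt, inF ends T A0 B0 s t As Bt ->
           As \subset Amax /\ Bmin \subset Bt),
        (forall A' B', inF ends T A0 B0 s t A' B' ->
           (forall As Bt, inF ends T A0 B0 s t As Bt ->
              As \subset A' /\ B' \subset Bt) ->
           A' = Amax /\ B' = Bmin)
      & (forall A : {set V},
           A0 :|: [set s] \subset A ->
           [disjoint A & B0] ->
           A :&: cover (Tprime T A0 B0) \subset [set s] ->
           A :\: Amax != set0 ->
           dcut ends Amax < dcut ends A)].
Proof.
move=> _ HT _ HA0B0 Hst HF.
have [Aq [Bq [Fq greatest]]] := exists_greatest_inF HT HA0B0 Hst HF.
exists Aq, Bq; split => //; first by case: Fq.
- move=> A' B' F' least; have [A'Aq BqB'] := greatest _ _ F'.
  have [AqA' B'Bq] := least _ _ Fq.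
  by split; apply/eqP; rewrite eqEsubset ?A'Aq ?AqA' ?BqB' ?B'Bq.
- move=> A; apply: (dcut_lt_of_not_sub HT HA0B0 Hst HF Fq).
  by move=> A' B' /greatest [].
Qed.
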